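(* Let $x\in\mathbb{R}_+^n$ and let $\mathrm{IC}(\mathbf{a}_0,\dots,\mathbf{a}_{n-1})$ be an interval circulant matrix containing $\hat A$. Then there exists $A\in\mathrm{IC}(\mathbf{a}_0,\dots,\mathbf{a}_{n-1})$ with $x\in\mathrm{Attr}(A)$ if and only if $x\in\mathrm{Attr}(\hat A)$.
   Context: Max algebra on $\mathbb{R}_+$: $\oplus=\max$, ordinary product; $\lambda(A)$ greatest max-algebraic eigenvalue (maximum cycle geometric mean); $\mathrm{Attr}(A)=\{x\in\mathbb{R}_+^n: A^{t+1}\otimes x=\lambda(A)A^t\otimes x\text{ for some }t\ge0\}$. $\mathrm{Circ}(a_0,\dots,a_{n-1})$ has entries $A_{i,j}=a_t$, $t\equiv j-i\pmod n$; $\mathrm{IC}(\mathbf{a}_0,\dots,\mathbf{a}_{n-1})$ is the set of all $\mathrm{Circ}(a_0,\dots,a_{n-1})$ with $a_t\in\mathbf{a}_t$, each $\mathbf{a}_t\subseteq\mathbb{R}_+$ a nonempty interval of one of the forms $[\underline{a}_t,\overline{a}_t]$, $(\underline{a}_t,\overline{a}_t)$, $(\underline{a}_t,\overline{a}_t]$, $[\underline{a}_t,\overline{a}_t)$. $\underline a=\max_k\underline a_k$, $\hat A=\mathrm{Circ}(\hat a_0,\dots,\hat a_{n-1})$, $\hat a_i=\min\{\underline a,\overline a_i\}$. *)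

(* classical reals R. Indices range over {0,...,n-1} (nat, with
   explicit bounds i < n); matrices are functions nat -> nat -> R and vectors
   nat -> R, only their values at indices < n matter. *)
From Stdlib Require Import Reals Lra Lia List Arith.
Import ListNotations.
Open Scope R_scope.

(* iterated max over the index range 0..n-1 (all quantities here are >= 0,
   so starting the fold at 0 is harmless). *)
Definition bigmax (n : nat) (f : nat -> R) : R :=
  fold_right (fun k acc => Rmax (f k) acc) 0 (seq 0 n).

(* Max-algebra operations (oplus = max, otimes = ordinary product). *)
Definition mmul (n : nat) (A B : nat -> nat -> R) : nat -> nat -> R :=
  fun i j => bigmax n (fun k => A i k * B k j).

Definition mid (i j : nat) : R := if Nat.eqb i j then 1 else 0.

Fixpoint mpow (n : nat) (A : nat -> nat -> R) (t : nat) : nat -> nat -> R :=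
  match t with
  | O => mid
  | S t' => mmul n A (mpow n A t')
  end.

Definition mvec (n : nat) (A : nat -> nat -> R) (x : nat -> R) : nat -> R :=
  fun i => bigmax n (fun j => A i j * x j).

Definition kroot (k : nat) (x : R) : R :=
  if Rle_dec x 0 then 0 else Rpower x (/ INR k).

Fixpoint words (n k : nat) : list (list nat) :=
  match k with
  | O => [[]]
  | S k' => flat_map (fun w => map (fun i => i :: w) (seq 0 n)) (words n k')
  end.

Fixpoint nodupb (l : list nat) : bool :=
  match l with
  | [] => true
  | i :: l' => negb (existsb (Nat.eqb i) l') && nodupb l'
  end.

Definition cycles (n : nat) : list (list nat) :=
  filter nodupb (flat_map (fun k => words n k) (seq 1 n)).

(* weight a_{i1 i2} a_{i2 i3} ... a_{ik i1} of the cycle *)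
Fixpoint path_w (A : nat -> nat -> R) (first : nat) (l : list nat) : R :=
  match l with
  | [] => 1
  | [i] => A i first
  | i :: ((j :: _) as l') => A i j * path_w A first l'
  end.

Definition cycle_w (A : nat -> nat -> R) (c : list nat) : R :=
  match c with
  | [] => 1
  | i :: _ => path_w A i c
  end.

Definition mlambda (n : nat) (A : nat -> nat -> R) : R :=
  fold_right Rmax 0
    (map (fun c => kroot (length c) (cycle_w A c)) (cycles n)).

Definition Attr (n : nat) (A : nat -> nat -> R) (x : nat -> R) : Prop :=
  exists t : nat, forall i, (i < n)%nat ->
    mvec n (mpow n A (S t)) x i = mlambda n A * mvec n (mpow n A t) x i.

Definition Circ (n : nat) (a : nat -> R) : nat -> nat -> R :=
  fun i j => a ((j + n - i) mod n)%nat.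

Record interval := Itv { lo : R; hi : R; lo_closed : bool; hi_closed : bool }.

Definition in_itv (I : interval) (a : R) : Prop :=
  (if lo_closed I then lo I <= a else lo I < a) /\
  (if hi_closed I then a <= hi I else a < hi I).

Definition in_IC (n : nat) (I : nat -> interval) (A : nat -> nat -> R) : Prop :=
  exists a : nat -> R, (forall t, (t < n)%nat -> in_itv (I t) (a t)) /\
    (forall i j, (i < n)%nat -> (j < n)%nat -> A i j = Circ n a i j).

Definition ulo (n : nat) (I : nat -> interval) : R := bigmax n (fun k => lo (I k)).
Definition ahat (n : nat) (I : nat -> interval) (i : nat) : R := Rmin (ulo n I) (hi (I i)).
Definition Ahat (n : nat) (I : nat -> interval) : nat -> nat -> R := Circ n (ahat n I).

(* For a circulant matrix, lambda is its largest coefficient: stepping cyclically by the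
   position of that coefficient gives a cycle of maximal geometric mean.  Normalizing by lambda,
   every A in the interval circulant satisfies A/lambda(A) <= Â/lambda(Â) <= 1 entrywise.
   If x is attracted by A, then z := (A/lambda)^T x is fixed by A/lambda, and the same cyclic
   walk shows x <= z; hence x <= z <= (Â/lambda)^T x and z <= (Â/lambda) z.  Iterating a matrix
   with entries <= 1 on a vector that it increases is monotone and becomes constant after n
   steps (a strict increase would trace back through n+1 distinct indices), so the sandwich
   makes (Â/lambda)^t x constant: x is attracted by Â. *)

From Stdlib Require Import Reals Lra Lia List Arith Wf_nat Classical.
Import ListNotations.
Open Scope R_scope.

Section FoldMax.
Variables (T : Type) (f : T -> R).

Lemma fold_max_nonneg l : 0 <= fold_right (fun k acc => Rmax (f k) acc) 0 l.
Proof. induction l; simpl; [lra|]. eapply Rle_trans; [exact IHl | apply Rmax_r]. Qed.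

Lemma fold_max_ub l k : In k l -> f k <= fold_right (fun k acc => Rmax (f k) acc) 0 l.
Proof.
  induction l as [|a l IH]; simpl; [tauto|]. intros [<-|Hk].
  - apply Rmax_l.
  - eapply Rle_trans; [apply IH, Hk | apply Rmax_r].
Qed.

Lemma fold_max_lub l c : 0 <= c -> (forall k, In k l -> f k <= c) ->
  fold_right (fun k acc => Rmax (f k) acc) 0 l <= c.
Proof. intros Hc. induction l; simpl; intros H; [lra|]. apply Rmax_lub; auto. Qed.

Lemma fold_max_attained l : l <> [] -> (forall k, In k l -> 0 <= f k) ->
  exists k, In k l /\ fold_right (fun k acc => Rmax (f k) acc) 0 l = f k.
Proof.
  induction l as [|a l IH]; intros Hl H; [congruence|]. simpl.
  destruct l as [|b l].
  - exists a. split; [now left|]. apply Rmax_left. apply H; now left.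
  - destruct IH as [k [Hk ->]]; [congruence | intros; apply H; now right|].
    destruct (Rle_dec (f a) (f k)).
    + exists k. split; [now right|]. now apply Rmax_right.
    + exists a. split; [now left|]. apply Rmax_left; lra.
Qed.

End FoldMax.

Lemma bigmax_nonneg n f : 0 <= bigmax n f.
Proof. apply fold_max_nonneg. Qed.

Lemma bigmax_ub n f k : (k < n)%nat -> f k <= bigmax n f.
Proof. intros Hk. apply fold_max_ub, in_seq. lia. Qed.

Lemma bigmax_lub n f c : 0 <= c -> (forall k, (k < n)%nat -> f k <= c) -> bigmax n f <= c.
Proof. intros Hc H. apply fold_max_lub; auto. intros k Hk%in_seq. apply H; lia. Qed.

Lemma bigmax_attained n f : (0 < n)%nat -> (forall k, (k < n)%nat -> 0 <= f k) ->
  exists k, (k < n)%nat /\ bigmax n f = f k.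
Proof.
  intros Hn H. destruct (fold_max_attained _ f (seq 0 n)) as [k [Hk%in_seq E]].
  - destruct n; [lia | discriminate].
  - intros k Hk%in_seq. apply H; lia.
  - exists k. split; [lia | exact E].
Qed.

Lemma bigmax_le_compat n f g : (forall k, (k < n)%nat -> f k <= g k) -> bigmax n f <= bigmax n g.
Proof.
  intros H. apply bigmax_lub; [apply bigmax_nonneg|]. intros k Hk.
  eapply Rle_trans; [apply H, Hk | apply bigmax_ub, Hk].
Qed.

Lemma bigmax_ext n f g : (forall k, (k < n)%nat -> f k = g k) -> bigmax n f = bigmax n g.
Proof. intros H. apply Rle_antisym; apply bigmax_le_compat; intros k Hk; rewrite H by exact Hk; lra. Qed.

Lemma bigmax_scale n f c : 0 <= c -> bigmax n (fun k => c * f k) = c * bigmax n f.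
Proof.
  intros Hc. unfold bigmax. induction (seq 0 n); simpl; [ring|].
  rewrite IHl. now apply RmaxRmult.
Qed.

Lemma bigmax_comm n m (F : nat -> nat -> R) :
  bigmax n (fun j => bigmax m (F j)) = bigmax m (fun k => bigmax n (fun j => F j k)).
Proof.
  apply Rle_antisym; apply bigmax_lub; try apply bigmax_nonneg; intros a Ha;
    apply bigmax_lub; try apply bigmax_nonneg; intros b Hb.
  - eapply Rle_trans; [|apply (bigmax_ub _ _ b Hb)]. apply (bigmax_ub _ (fun j => F j b)), Ha.
  - eapply Rle_trans; [|apply (bigmax_ub _ _ b Hb)]. apply (bigmax_ub _ (F b)), Ha.
Qed.

Definition nonneg_vec (n : nat) (x : nat -> R) : Prop := forall i, (i < n)%nat -> 0 <= x i.
Definition vec_le (n : nat) (x y : nat -> R) : Prop := forall i, (i < n)%nat -> x i <= y i.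
Definition nonneg_mx (n : nat) (A : nat -> nat -> R) : Prop :=
  forall i j, (i < n)%nat -> (j < n)%nat -> 0 <= A i j.
Definition mx_le (n : nat) (A B : nat -> nat -> R) : Prop :=
  forall i j, (i < n)%nat -> (j < n)%nat -> A i j <= B i j.

Definition miter (n : nat) (A : nat -> nat -> R) (t : nat) (x : nat -> R) : nat -> R :=
  mvec n (mpow n A t) x.

Section MaxIteration.
Variable n : nat.
Implicit Types (A B : nat -> nat -> R) (x y : nat -> R).

Lemma miter_nonneg A t x : nonneg_vec n (miter n A t x).
Proof. intros i _. apply bigmax_nonneg. Qed.

Lemma miter_0 A x i : nonneg_vec n x -> (i < n)%nat -> miter n A 0 x i = x i.
Proof.
  intros Hx Hi. unfold miter, mvec, mpow. apply Rle_antisym.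
  - apply bigmax_lub; [now apply Hx|]. intros k Hk. unfold mid.
    destruct (Nat.eqb_spec i k) as [<-|_]; [lra|]. rewrite Rmult_0_l. now apply Hx.
  - replace (x i) with (mid i i * x i) at 1 by (unfold mid; rewrite Nat.eqb_refl; ring).
    apply (bigmax_ub n (fun j => mid i j * x j)), Hi.
Qed.

Lemma miter_succ A t x i : nonneg_mx n A -> nonneg_vec n x -> (i < n)%nat ->
  miter n A (S t) x i = bigmax n (fun k => A i k * miter n A t x k).
Proof.
  intros HA Hx Hi. unfold miter, mvec. simpl. unfold mmul.
  transitivity (bigmax n (fun j => bigmax n (fun k => A i k * mpow n A t k j * x j))).
  - apply bigmax_ext; intros j Hj. rewrite Rmult_comm, <- bigmax_scale by auto.
    apply bigmax_ext; intros; ring.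
  - rewrite bigmax_comm. apply bigmax_ext; intros k Hk.
    rewrite <- bigmax_scale by auto. apply bigmax_ext; intros; ring.
Qed.

Lemma miter_add A p q x i : nonneg_mx n A -> nonneg_vec n x -> (i < n)%nat ->
  miter n A (p + q) x i = miter n A p (miter n A q x) i.
Proof.
  intros HA Hx. revert i. induction p as [|p IH]; intros i Hi; simpl.
  - rewrite miter_0; auto. apply miter_nonneg.
  - rewrite !miter_succ; auto; [|apply miter_nonneg].
    apply bigmax_ext; intros k Hk. now rewrite IH.
Qed.

Lemma miter_le_compat A B t x y i : nonneg_mx n A -> mx_le n A B ->
  nonneg_vec n x -> vec_le n x y -> (i < n)%nat ->
  miter n A t x i <= miter n B t y i.
Proof.
  intros HA HAB Hx Hxy Hi.
  assert (HB : nonneg_mx n B) by (intros p q Hp Hq; eapply Rle_trans; [apply HA | apply HAB]; auto).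
  assert (Hy : nonneg_vec n y) by (intros j Hj; eapply Rle_trans; [apply Hx | apply Hxy]; auto).
  revert i Hi. induction t as [|t IH]; intros i Hi.
  - rewrite !miter_0; auto.
  - rewrite !miter_succ; auto. apply bigmax_le_compat; intros k Hk.
    apply Rmult_le_compat; auto; apply miter_nonneg; auto.
Qed.

Lemma mpow_scale A A' c t i j : (forall i j, A i j = c * A' i j) -> 0 <= c ->
  mpow n A t i j = c ^ t * mpow n A' t i j.
Proof.
  intros HA Hc. revert i j. induction t as [|t IH]; intros i j; simpl; [ring|].
  unfold mmul. rewrite <- bigmax_scale by (apply Rmult_le_pos, pow_le; auto).
  apply bigmax_ext; intros k _. rewrite HA, IH. ring.
Qed.

Lemma miter_scale A A' c t x i : (forall i j, A i j = c * A' i j) -> 0 <= c ->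
  miter n A t x i = c ^ t * miter n A' t x i.
Proof.
  intros HA Hc. unfold miter, mvec. rewrite <- bigmax_scale by (apply pow_le, Hc).
  apply bigmax_ext; intros k _. rewrite (mpow_scale A A' c) by auto. ring.
Qed.

Lemma miter_fixed_after A T x : nonneg_mx n A -> nonneg_vec n x ->
  (forall i, (i < n)%nat -> miter n A (S T) x i = miter n A T x i) ->
  forall d i, (i < n)%nat -> miter n A (d + T) x i = miter n A T x i.
Proof.
  intros HA Hx HT. induction d as [|d IH]; intros i Hi; [reflexivity|].
  simpl. rewrite <- HT, !miter_succ by auto. apply bigmax_ext; intros k Hk. now rewrite IH.
Qed.

End MaxIteration.

Section Stabilization.
Variables (n : nat) (B : nat -> nat -> R) (z : nat -> R).
Hypotheses (HB : nonneg_mx n B) (HB1 : forall i j, (i < n)%nat -> (j < n)%nat -> B i j <= 1)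
  (Hz : nonneg_vec n z) (Hzinc : vec_le n z (miter n B 1 z)).

Local Notation g s := (miter n B s z).

Lemma miter_le_succ s i : (i < n)%nat -> g s i <= g (S s) i.
Proof.
  intros Hi. rewrite <- Nat.add_1_r, miter_add by auto.
  apply miter_le_compat; auto. intros p q _ _; lra.
Qed.

Lemma miter_le_later s s' i : (s <= s')%nat -> (i < n)%nat -> g s i <= g s' i.
Proof.
  intros Hs Hi. induction Hs as [|s' _ IH]; [lra|].
  eapply Rle_trans; [exact IH | apply miter_le_succ, Hi].
Qed.

(* A strict increase at [i] in step [s+2] is fed by a strict increase one step earlier at the
   index [k] realizing the maximum, which already carries a value at least as large. *)
Lemma strict_increase_source s i : (i < n)%nat -> g (S s) i < g (S (S s)) i ->
  exists k, (k < n)%nat /\ g s k < g (S s) k /\ g (S (S s)) i <= g (S s) k.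
Proof.
  intros Hi Hlt.
  destruct (bigmax_attained n (fun k => B i k * g (S s) k)) as [k [Hk Ek]];
    [lia | intros k Hk; apply Rmult_le_pos; [apply HB | apply miter_nonneg]; auto |].
  rewrite <- miter_succ in Ek by auto.
  assert (Hg : 0 <= g (S s) k) by (apply miter_nonneg; auto).
  pose proof (HB i k Hi Hk). pose proof (HB1 i k Hi Hk).
  exists k. split; [exact Hk|]. split.
  - apply Rnot_le_lt. intros Hle.
    assert (B i k * g s k <= g (S s) i).
    { rewrite miter_succ by auto. apply (bigmax_ub n (fun k => B i k * g s k)), Hk. }
    assert (B i k * g (S s) k <= B i k * g s k) by (apply Rmult_le_compat_l; lra).
    lra.
  - rewrite Ek. nra.
Qed.

Lemma strict_increase_chain m s i : (i < n)%nat -> (m <= s)%nat -> g s i < g (S s) i ->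
  exists l, length l = S m /\ NoDup l /\
    forall k, In k l -> (k < n)%nat /\ exists s', (s' <= s)%nat /\ g (S s) i <= g (S s') k.
Proof.
  revert s i. induction m as [|m IH]; intros s i Hi Hms Hlt.
  - exists [i]. split; [reflexivity|]. split; [repeat constructor; simpl; tauto|].
    intros k [<-|[]]. split; [exact Hi|]. exists s. split; [lia | lra].
  - destruct s as [|s]; [lia|].
    destruct (strict_increase_source s i Hi Hlt) as [k [Hk [Hk_lt Hk_ge]]].
    destruct (IH s k Hk ltac:(lia) Hk_lt) as [l [Hlen [Hnd Hl]]].
    exists (i :: l). split; [simpl; lia|]. split.
    + constructor; [|exact Hnd]. intros Hin.
      destruct (Hl i Hin) as [_ [s' [Hs' Hge]]].
      assert (g (S s') i <= g (S s) i) by (apply miter_le_later; auto; lia). lra.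
    + intros k' [<-|Hk'].
      * split; [exact Hi|]. exists (S s). split; [lia | lra].
      * destruct (Hl k' Hk') as [Hk'n [s' [Hs' Hge]]]. split; [exact Hk'n|].
        exists s'. split; [lia | lra].
Qed.

(* A chain of strict increases reaching back [n+1] steps visits [n+1] distinct indices. *)
Lemma miter_stabilizes s i : (n <= s)%nat -> (i < n)%nat -> g (S s) i = g s i.
Proof.
  intros Hs Hi. apply Rle_antisym; [|apply miter_le_succ, Hi].
  apply Rnot_lt_le. intros Hlt.
  destruct (strict_increase_chain n s i Hi Hs Hlt) as [l [Hlen [Hnd Hl]]].
  assert (length l <= length (seq 0 n))%nat.
  { apply NoDup_incl_length; [exact Hnd|]. intros k Hk. apply in_seq. destruct (Hl k Hk); lia. }
  rewrite length_seq in H. lia.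
Qed.

Lemma miter_constant_after s i : (n <= s)%nat -> (i < n)%nat -> g s i = g n i.
Proof.
  intros Hs Hi. induction Hs as [|s Hs IH]; [reflexivity|].
  rewrite miter_stabilizes; auto.
Qed.

End Stabilization.

Lemma miter_eventually_fixed_of_sandwich n B x z T : nonneg_mx n B ->
  (forall i j, (i < n)%nat -> (j < n)%nat -> B i j <= 1) -> nonneg_vec n x ->
  vec_le n x z -> vec_le n z (miter n B T x) -> vec_le n z (miter n B 1 z) ->
  forall i, (i < n)%nat -> miter n B (S (n + T)) x i = miter n B (n + T) x i.
Proof.
  intros HB HB1 Hx Hxz HzT Hzinc.
  assert (Hz : nonneg_vec n z) by (intros j Hj; eapply Rle_trans; [apply Hx | apply Hxz]; auto).
  assert (HBB : mx_le n B B) by (intros p q _ _; lra).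
  assert (Hlim : forall d i, (i < n)%nat -> miter n B (d + n + T) x i = miter n B n z i).
  { intros d i Hi. apply Rle_antisym.
    - rewrite <- (miter_constant_after n B z HB HB1 Hz Hzinc (d + n + T)) by (auto; lia).
      apply miter_le_compat; auto.
    - rewrite miter_add by auto.
      rewrite <- (miter_constant_after n B z HB HB1 Hz Hzinc (d + n)) by (auto; lia).
      apply miter_le_compat; auto. }
  intros i Hi. exact (eq_trans (Hlim 1%nat i Hi) (eq_sym (Hlim 0%nat i Hi))).
Qed.

Lemma miter_eventually_fixed_of_dominated n A B x T : nonneg_mx n A -> mx_le n A B ->
  (forall i j, (i < n)%nat -> (j < n)%nat -> B i j <= 1) -> nonneg_vec n x ->
  (exists m, (T <= m)%nat /\ vec_le n x (miter n A m x)) ->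
  (forall i, (i < n)%nat -> miter n A (S T) x i = miter n A T x i) ->
  exists t, forall i, (i < n)%nat -> miter n B (S t) x i = miter n B t x i.
Proof.
  intros HA HAB HB1 Hx [m [Hm Hret]] HT.
  assert (HB : nonneg_mx n B) by (intros p q Hp Hq; eapply Rle_trans; [apply HA | apply HAB]; auto).
  assert (HAA : mx_le n A A) by (intros p q _ _; lra).
  set (z := miter n A T x).
  exists (n + T)%nat. apply (miter_eventually_fixed_of_sandwich n B x z T); auto.
  - intros i Hi. replace m with (m - T + T)%nat in Hret by lia.
    unfold z. rewrite <- (miter_fixed_after n A T x HA Hx HT (m - T) i Hi). apply Hret, Hi.
  - intros i Hi. apply miter_le_compat; auto. intros j _; lra.
  - intros i Hi. unfold z. rewrite <- HT, <- Nat.add_1_l, miter_add by auto.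
    apply miter_le_compat; auto using miter_nonneg. intros j _; lra.
Qed.

Lemma In_words n k l : In l (words n k) <-> length l = k /\ forall i, In i l -> (i < n)%nat.
Proof.
  revert l; induction k as [|k IH]; intros l; simpl.
  - split; [intros [<-|[]]; simpl; tauto|]. intros [Hl _]. left. now destruct l.
  - rewrite in_flat_map. split.
    + intros [w [Hw%IH Hl%in_map_iff]]. destruct Hl as [i [<- Hi%in_seq]]. simpl.
      split; [lia|]. intros j [<-|Hj]; [lia | now apply Hw].
    + intros [Hl Hi]. destruct l as [|i w]; [discriminate|]. exists w. split.
      * apply IH. split; [simpl in Hl; lia|]. intros j Hj. apply Hi. now right.
      * apply in_map_iff. exists i. split; [reflexivity|]. apply in_seq.
        assert (i < n)%nat by (apply Hi; now left). lia.
Qed.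

Lemma nodupb_NoDup l : NoDup l -> nodupb l = true.
Proof.
  induction 1 as [|i l Hi _ IH]; simpl; [reflexivity|]. rewrite IH, Bool.andb_true_r.
  apply Bool.negb_true_iff, Bool.not_true_iff_false. intros [j [Hj Eij%Nat.eqb_eq]]%existsb_exists.
  subst. contradiction.
Qed.

Lemma cycles_bounded n c : In c (cycles n) ->
  c <> [] /\ forall i, In i c -> (i < n)%nat.
Proof.
  intros [Hc _]%filter_In. apply in_flat_map in Hc as [k [Hk%in_seq [Hl Hi]%In_words]].
  split; [|exact Hi]. intros ->. simpl in Hl. lia.
Qed.

Lemma In_cycles n c : NoDup c -> (1 <= length c <= n)%nat -> (forall i, In i c -> (i < n)%nat) ->
  In c (cycles n).
Proof.
  intros Hnd Hl Hi. apply filter_In. split; [|now apply nodupb_NoDup].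
  apply in_flat_map. exists (length c). split; [apply in_seq; lia | now apply In_words].
Qed.

Lemma path_w_bounds n A M first l : (first < n)%nat -> (forall i, In i l -> (i < n)%nat) ->
  (forall i j, (i < n)%nat -> (j < n)%nat -> 0 <= A i j <= M) ->
  0 <= path_w A first l <= M ^ length l.
Proof.
  intros Hf Hl HA. induction l as [|a l IH]; simpl; [lra|].
  assert (Ha : (a < n)%nat) by (apply Hl; now left).
  destruct l as [|b l].
  - rewrite Rmult_1_r. now apply HA.
  - destruct IH as [IH0 IH1]; [intros i Hi; apply Hl; now right|].
    assert (0 <= A a b <= M) by (apply HA; [|apply Hl; right; left]; auto).
    change (path_w A first (a :: b :: l)) with (A a b * path_w A first (b :: l)).
    split; [apply Rmult_le_pos | apply Rmult_le_compat]; lra.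
Qed.

Lemma Rpower_pow_inv M k : (1 <= k)%nat -> 0 < M -> Rpower (M ^ k) (/ INR k) = M.
Proof.
  intros Hk HM. rewrite <- Rpower_pow, Rpower_mult, Rinv_r by (auto; apply not_0_INR; lia).
  now apply Rpower_1.
Qed.

Lemma kroot_le k w M : (1 <= k)%nat -> 0 <= w <= M ^ k -> 0 <= M -> kroot k w <= M.
Proof.
  intros Hk Hw HM. unfold kroot. destruct (Rle_dec w 0); [exact HM|].
  destruct (Req_dec M 0) as [->|HM0].
  - rewrite pow_i in Hw by lia. lra.
  - rewrite <- (Rpower_pow_inv M k) by (auto; lra). apply Rle_Rpower_l; [|lra].
    left. apply Rinv_0_lt_compat, lt_0_INR. lia.
Qed.

Lemma kroot_pow k a : (1 <= k)%nat -> 0 < a -> kroot k (a ^ k) = a.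
Proof.
  intros Hk Ha. unfold kroot. destruct (Rle_dec (a ^ k) 0) as [Hle|_].
  - pose proof (pow_lt a k Ha). lra.
  - now apply Rpower_pow_inv.
Qed.

Lemma mlambda_nonneg n A : 0 <= mlambda n A.
Proof. apply (fold_max_nonneg R (fun y => y)). Qed.

Lemma mlambda_le n A M : 0 <= M -> (forall i j, (i < n)%nat -> (j < n)%nat -> 0 <= A i j <= M) ->
  mlambda n A <= M.
Proof.
  intros HM HA. apply (fold_max_lub R (fun y => y)); [exact HM|].
  intros y [c [<- [Hc Hi]%cycles_bounded]]%in_map_iff.
  destruct c as [|i c]; [congruence|]. apply kroot_le; [simpl; lia | | exact HM].
  apply (path_w_bounds n); auto. apply Hi. now left.
Qed.

Fixpoint orbit (f : nat -> nat) (p m : nat) : list nat :=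
  match m with O => [] | S m' => p :: orbit f (f p) m' end.

Lemma orbit_map f p m : orbit f p m = map (fun j => Nat.iter j f p) (seq 0 m).
Proof.
  revert p; induction m as [|m IH]; intros p; simpl; [reflexivity|]. f_equal.
  rewrite IH, <- seq_shift, map_map. apply map_ext. intros j. symmetry. apply Nat.iter_succ_r.
Qed.

Lemma orbit_length f p m : length (orbit f p m) = m.
Proof. now rewrite orbit_map, length_map, length_seq. Qed.

(* Distinctness uses only [f^L p = p] for the least such [L > 0]:
   [f^i p = f^j p] with [i < j < L] would give [f^(L-j+i) p = f^L p = p]. *)
Lemma orbit_NoDup f p L : (0 < L)%nat -> Nat.iter L f p = p ->
  (forall k, (0 < k < L)%nat -> Nat.iter k f p <> p) -> NoDup (orbit f p L).
Proof.
  intros HL Hper Hmin. rewrite orbit_map.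
  assert (Hinj : forall i j, (i < j < L)%nat -> Nat.iter i f p <> Nat.iter j f p).
  { intros i j Hij E. apply (Hmin (L - j + i)%nat); [lia|].
    rewrite Nat.iter_add, E, <- Nat.iter_add. now replace (L - j + j)%nat with L by lia. }
  apply NoDup_map_NoDup_ForallPairs; [|apply seq_NoDup].
  intros i j Hi%in_seq Hj%in_seq E.
  destruct (Nat.lt_trichotomy i j) as [Hlt|[Heq|Hgt]]; [exfalso | exact Heq | exfalso].
  - apply (Hinj i j); [lia | exact E].
  - apply (Hinj j i); [lia | now symmetry].
Qed.

Lemma path_w_orbit n A f c first m p : (forall q, (q < n)%nat -> A q (f q) = c) ->
  (forall q, (q < n)%nat -> (f q < n)%nat) -> (p < n)%nat ->
  Nat.iter (S m) f p = first -> path_w A first (orbit f p (S m)) = c ^ S m.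
Proof.
  intros HA Hf. revert p. induction m as [|m IH]; intros p Hp Hit.
  - simpl in *. subst. rewrite HA by exact Hp. ring.
  - change (path_w A first (orbit f p (S (S m))))
      with (A p (f p) * path_w A first (orbit f (f p) (S m))).
    rewrite IH, HA by (auto; now rewrite <- Nat.iter_succ_r). reflexivity.
Qed.

(* The orbit of a periodic point of [f], taken over its least period [L], is an elementary
   cycle of weight [c ^ L]. *)
Lemma mlambda_ge_periodic n A f c p N : (forall q, (q < n)%nat -> A q (f q) = c) ->
  (forall q, (q < n)%nat -> (f q < n)%nat) -> (p < n)%nat -> (0 < N)%nat ->
  Nat.iter N f p = p -> 0 <= c -> c <= mlambda n A.
Proof.
  intros HA Hf Hp HN Hper Hc.
  destruct (Req_dec c 0) as [->|Hc0]; [apply mlambda_nonneg|].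
  destruct (dec_inh_nat_subset_has_unique_least_element
              (fun L => (0 < L)%nat /\ Nat.iter L f p = p)) as [L [[[HL HLper] HLmin] _]].
  { intros L. apply classic. }
  { now exists N. }
  assert (Hmin : forall k, (0 < k < L)%nat -> Nat.iter k f p <> p).
  { intros k Hk Hkper. specialize (HLmin k (conj (proj1 Hk) Hkper)). lia. }
  set (cyc := orbit f p L).
  assert (Hcyc_n : forall i, In i cyc -> (i < n)%nat).
  { intros i Hi. unfold cyc in Hi. rewrite orbit_map in Hi.
    apply in_map_iff in Hi as [j [<- _]]. clear -Hf Hp.
    induction j as [|j IH]; simpl; auto. }
  assert (Hnd : NoDup cyc) by now apply orbit_NoDup.
  assert (Hlen : (length cyc <= n)%nat).
  { rewrite <- (length_seq n 0). apply NoDup_incl_length; [exact Hnd|].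
    intros i Hi. apply in_seq. specialize (Hcyc_n i Hi). lia. }
  unfold cyc in Hlen. rewrite orbit_length in Hlen.
  apply (fold_max_ub R (fun y => y)), in_map_iff. exists cyc. split.
  - destruct L as [|L']; [lia|].
    change (kroot (length cyc) (path_w A p cyc) = c).
    unfold cyc. rewrite orbit_length, (path_w_orbit n A f c p L' p) by auto.
    apply kroot_pow; [lia | lra].
  - apply In_cycles; [exact Hnd | unfold cyc; rewrite orbit_length; lia | exact Hcyc_n].
Qed.

Lemma Circ_index_lt n i j : (i < n)%nat -> ((j + n - i) mod n < n)%nat.
Proof. intros Hi. apply Nat.mod_upper_bound. lia. Qed.

Lemma Circ_shift n a i s : (i < n)%nat -> (s < n)%nat -> Circ n a i ((i + s) mod n) = a s.
Proof.
  intros Hi Hs. unfold Circ. f_equal.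
  destruct (Nat.lt_ge_cases (i + s) n) as [Hlt|Hge].
  - rewrite (Nat.mod_small (i + s) n Hlt).
    replace (i + s + n - i)%nat with (s + 1 * n)%nat by lia.
    rewrite Nat.Div0.mod_add. now apply Nat.mod_small.
  - replace (i + s)%nat with ((i + s - n) + 1 * n)%nat by lia.
    rewrite Nat.Div0.mod_add, (Nat.mod_small (i + s - n) n) by lia.
    replace (i + s - n + n - i)%nat with s by lia. now apply Nat.mod_small.
Qed.

Lemma Circ_row0 n a t : (t < n)%nat -> Circ n a 0 t = a t.
Proof. intros Ht. rewrite <- (Circ_shift n a 0 t) by lia. now rewrite Nat.mod_small. Qed.

Lemma Circ_bounds n a i j : nonneg_vec n a -> (i < n)%nat ->
  0 <= Circ n a i j <= bigmax n a.
Proof.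
  intros Ha Hi. pose proof (Circ_index_lt n i j Hi). unfold Circ.
  split; [now apply Ha | now apply bigmax_ub].
Qed.

Lemma iter_shift n s m p : (p < n)%nat ->
  Nat.iter m (fun q => (q + s) mod n) p = ((p + m * s) mod n)%nat.
Proof.
  intros Hp. induction m as [|m IH]; simpl.
  - rewrite Nat.add_0_r. symmetry. now apply Nat.mod_small.
  - rewrite IH, Nat.Div0.add_mod_idemp_l. f_equal. lia.
Qed.

(* Stepping by the position [s0] of the largest coefficient runs along entries all equal to
   the maximum, and returns to its start after [n] steps. *)
Lemma mlambda_Circ n a : (0 < n)%nat -> nonneg_vec n a -> mlambda n (Circ n a) = bigmax n a.
Proof.
  intros Hn Ha. apply Rle_antisym.
  - apply mlambda_le; [apply bigmax_nonneg|]. intros i j Hi _. now apply Circ_bounds.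
  - destruct (bigmax_attained n a Hn Ha) as [s0 [Hs0 ->]].
    apply (mlambda_ge_periodic n (Circ n a) (fun q => (q + s0) mod n) (a s0) 0 n); auto.
    + intros q Hq. now apply Circ_shift.
    + intros q _. apply Nat.mod_upper_bound. lia.
    + rewrite iter_shift by exact Hn. simpl.
      replace (n * s0)%nat with (s0 * n)%nat by lia. apply Nat.Div0.mod_mul.
Qed.

Lemma miter_ge_along_map n A f y : nonneg_mx n A -> nonneg_vec n y ->
  (forall q, (q < n)%nat -> (f q < n)%nat) -> (forall q, (q < n)%nat -> 1 <= A q (f q)) ->
  forall r i, (i < n)%nat -> y (Nat.iter r f i) <= miter n A r y i.
Proof.
  intros HA Hy Hf H1. induction r as [|r IH]; intros i Hi.
  - simpl. rewrite miter_0 by auto. lra.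
  - rewrite miter_succ, Nat.iter_succ_r by auto.
    eapply Rle_trans; [apply IH, Hf, Hi|].
    eapply Rle_trans; [|apply (bigmax_ub n (fun k => A i k * miter n A r y k)), Hf, Hi].
    rewrite <- (Rmult_1_l (miter n A r y (f i))) at 1.
    apply Rmult_le_compat_r; [apply miter_nonneg, Hf, Hi | apply H1, Hi].
Qed.

Lemma miter_Circ_return n a s0 x m : nonneg_vec n a -> (s0 < n)%nat -> a s0 = 1 ->
  nonneg_vec n x -> vec_le n x (miter n (Circ n a) (m * n) x).
Proof.
  intros Ha Hs0 H1 Hx i Hi.
  assert (HC : nonneg_mx n (Circ n a)) by (intros p q Hp _; now apply Circ_bounds).
  assert (Hf : forall q, (q < n)%nat -> ((q + s0) mod n < n)%nat)
    by (intros q Hq; apply Nat.mod_upper_bound; lia).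
  assert (Hdiag : forall q, (q < n)%nat -> 1 <= Circ n a q ((q + s0) mod n))
    by (intros q Hq; rewrite Circ_shift; auto; lra).
  pose proof (miter_ge_along_map n _ _ x HC Hx Hf Hdiag (m * n) i Hi) as Hwalk.
  rewrite iter_shift in Hwalk by exact Hi.
  replace (i + m * n * s0)%nat with (i + m * s0 * n)%nat in Hwalk by lia.
  now rewrite Nat.Div0.mod_add, Nat.mod_small in Hwalk.
Qed.

Lemma Attr_iff_normalized n A x : 0 < mlambda n A ->
  Attr n A x <-> exists t, forall i, (i < n)%nat ->
    miter n (fun i j => A i j / mlambda n A) (S t) x i =
    miter n (fun i j => A i j / mlambda n A) t x i.
Proof.
  intros Hl. set (l := mlambda n A) in *. set (A' := fun i j => A i j / l).
  assert (Hscale : forall t i, miter n A t x i = l ^ t * miter n A' t x i).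
  { intros t i. apply miter_scale; [intros p q; unfold A'; field | ]; lra. }
  unfold Attr. fold l.
  split; intros [t Ht]; exists t; intros i Hi; specialize (Ht i Hi).
  - change (miter n A (S t) x i = l * miter n A t x i) in Ht.
    rewrite !Hscale in Ht. simpl in Ht.
    pose proof (pow_lt l t Hl).
    apply (Rmult_eq_reg_l (l * l ^ t)); [lra | nra].
  - change (miter n A (S t) x i = l * miter n A t x i).
    rewrite !Hscale, Ht. simpl. ring.
Qed.

Lemma Attr_zero_mx n A x : nonneg_vec n x ->
  (forall i j, (i < n)%nat -> (j < n)%nat -> A i j = 0) -> Attr n A x.
Proof.
  intros Hx HA.
  assert (HA0 : nonneg_mx n A) by (intros i j Hi Hj; rewrite HA by auto; lra).
  assert (Hl : mlambda n A = 0).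
  { apply Rle_antisym; [|apply mlambda_nonneg].
    apply mlambda_le; [lra|]. intros i j Hi Hj. rewrite HA by auto. lra. }
  exists 0%nat. intros i Hi. rewrite Hl, Rmult_0_l.
  change (miter n A 1 x i = 0). rewrite miter_succ by auto.
  apply Rle_antisym; [|apply bigmax_nonneg].
  apply bigmax_lub; [lra|]. intros k Hk. rewrite HA by auto. lra.
Qed.

Section Extensionality.
Variables (n : nat) (A B : nat -> nat -> R).
Hypothesis HAB : forall i j, (i < n)%nat -> (j < n)%nat -> A i j = B i j.

Lemma mpow_ext t i j : (i < n)%nat -> mpow n A t i j = mpow n B t i j.
Proof.
  revert i j. induction t as [|t IH]; intros i j Hi; [reflexivity|]. simpl. unfold mmul.
  apply bigmax_ext. intros k Hk. now rewrite HAB, IH.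
Qed.

Lemma path_w_ext first l : (first < n)%nat -> (forall i, In i l -> (i < n)%nat) ->
  path_w A first l = path_w B first l.
Proof.
  intros Hf Hl. induction l as [|a l IH]; [reflexivity|].
  assert (Ha : (a < n)%nat) by (apply Hl; now left).
  destruct l as [|b l]; [simpl; now apply HAB|].
  change (A a b * path_w A first (b :: l) = B a b * path_w B first (b :: l)).
  rewrite HAB, IH; auto; [intros i Hi; apply Hl; now right | apply Hl; right; now left].
Qed.

Lemma mlambda_ext : mlambda n A = mlambda n B.
Proof.
  unfold mlambda. f_equal. apply map_ext_in. intros c [Hc Hi]%cycles_bounded.
  destruct c as [|i c]; [congruence|]. unfold cycle_w. rewrite path_w_ext; auto.
  apply Hi. now left.
Qed.

Lemma miter_ext t x i : (i < n)%nat -> miter n A t x i = miter n B t x i.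
Proof. intros Hi. apply bigmax_ext. intros k _. now rewrite mpow_ext. Qed.

Lemma Attr_ext x : Attr n A x -> Attr n B x.
Proof.
  intros [t Ht]. exists t. intros i Hi. specialize (Ht i Hi).
  change (miter n A (S t) x i = mlambda n A * miter n A t x i) in Ht.
  change (miter n B (S t) x i = mlambda n B * miter n B t x i).
  now rewrite <- !miter_ext, <- mlambda_ext.
Qed.

End Extensionality.

Lemma Rdiv_le_cross a b M N : 0 < M -> 0 < N -> a * N <= b * M -> a / M <= b / N.
Proof.
  intros HM HN H. apply (Rmult_le_reg_r (M * N)); [nra|].
  replace (a / M * (M * N)) with (a * N) by (field; lra).
  replace (b / N * (M * N)) with (b * M) by (field; lra). exact H.
Qed.

(* The domination hypothesis says [Circ a / lambda(Circ a) <= Circ b / lambda(Circ b)]. *)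
Lemma Attr_Circ_transfer n a b x : (0 < n)%nat -> nonneg_vec n a -> nonneg_vec n b ->
  nonneg_vec n x -> bigmax n b <= bigmax n a ->
  (forall t, (t < n)%nat -> a t * bigmax n b <= b t * bigmax n a) ->
  Attr n (Circ n a) x -> Attr n (Circ n b) x.
Proof.
  intros Hn Ha Hb Hx Hab Hdom HAttr.
  destruct (Rle_lt_dec (bigmax n b) 0) as [Hb0|Hb0].
  { apply Attr_zero_mx; [exact Hx|]. intros i j Hi _.
    pose proof (Circ_bounds n b i j Hb Hi). lra. }
  assert (Ha0 : 0 < bigmax n a) by lra.
  rewrite Attr_iff_normalized, mlambda_Circ in HAttr |- * by (rewrite ?mlambda_Circ; auto).
  destruct HAttr as [T HT].
  destruct (bigmax_attained n a Hn Ha) as [s0 [Hs0 Es0]].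
  apply (miter_eventually_fixed_of_dominated n (fun i j => Circ n a i j / bigmax n a) _ x T);
    auto.
  - intros i j Hi _. pose proof (Circ_bounds n a i j Ha Hi).
    apply Rmult_le_pos; [lra | left; now apply Rinv_0_lt_compat].
  - intros i j Hi _. pose proof (Circ_index_lt n i j Hi). unfold Circ.
    apply Rdiv_le_cross; auto.
  - intros i j Hi _. pose proof (Circ_bounds n b i j Hb Hi).
    rewrite <- (Rinv_r (bigmax n b)) by lra.
    apply Rmult_le_compat_r; [left; now apply Rinv_0_lt_compat | lra].
  - exists (T * n)%nat. split; [nia|].
    apply (miter_Circ_return n (fun t => a t / bigmax n a) s0); auto.
    + intros t Ht. apply Rmult_le_pos; [now apply Ha | left; now apply Rinv_0_lt_compat].
    + rewrite <- Es0. field. lra.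
Qed.

Lemma in_itv_bounds J v : in_itv J v -> lo J <= v <= hi J.
Proof. unfold in_itv. destruct (lo_closed J), (hi_closed J); intros [H1 H2]; split; lra. Qed.

Lemma Rmin_scaled_ge a h u M m : 0 <= a -> a <= h -> a <= M -> 0 <= m -> m <= u -> u <= M ->
  a * m <= Rmin u h * M.
Proof. intros. unfold Rmin. destruct (Rle_dec u h); nra. Qed.

Theorem corollary4 (n : nat) (I : nat -> interval) (x : nat -> R)
  (Hn : (0 < n)%nat)
  (Hnonneg : forall t, (t < n)%nat -> 0 <= lo (I t))
  (Hnonempty : forall t, (t < n)%nat -> exists a, in_itv (I t) a)
  (Hx : forall i, (i < n)%nat -> 0 <= x i)
  (Hhat : in_IC n I (Ahat n I)) :
  (exists A, in_IC n I A /\ Attr n A x) <-> Attr n (Ahat n I) x.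
Proof.
  split; [|intros H; now exists (Ahat n I)].
  intros [A [[a [Ha HAa]] HA]].
  assert (Ha_lh : forall t, (t < n)%nat -> lo (I t) <= a t <= hi (I t))
    by (intros t Ht; now apply in_itv_bounds, Ha).
  assert (Hhat_lh : forall t, (t < n)%nat -> lo (I t) <= ahat n I t <= hi (I t)).
  { destruct Hhat as [c [Hc Hcc]]. intros t Ht.
    pose proof (Hcc 0%nat t Hn Ht) as E. unfold Ahat in E. rewrite !Circ_row0 in E by exact Ht.
    rewrite E. now apply in_itv_bounds, Hc. }
  assert (Ha0 : nonneg_vec n a)
    by (intros t Ht; specialize (Ha_lh t Ht); specialize (Hnonneg t Ht); lra).
  assert (Hhat0 : nonneg_vec n (ahat n I))
    by (intros t Ht; specialize (Hhat_lh t Ht); specialize (Hnonneg t Ht); lra).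
  assert (Hhat_u : bigmax n (ahat n I) <= ulo n I)
    by (apply bigmax_lub; [apply bigmax_nonneg | intros t _; apply Rmin_l]).
  assert (Hu_a : ulo n I <= bigmax n a) by (apply bigmax_le_compat; intros t Ht; apply Ha_lh, Ht).
  apply (Attr_Circ_transfer n a (ahat n I) x); auto; [lra | |].
  - intros t Ht. apply Rmin_scaled_ge; try apply bigmax_nonneg; auto.
    + now apply Ha_lh.
    + now apply bigmax_ub.
  - now apply (Attr_ext n A).
Qed.
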